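(* Let $p$ be an odd prime and $a_1,a_2\in\mathbb{Z}_p^*$. If $a_1,a_2$ are either both quadratic residues modulo $p$ or both quadratic nonresidues modulo $p$, then $Q_{a_1,0}(\mathbb{Z}_p)\cong Q_{a_2,0}(\mathbb{Z}_p)$.
   Context: Identify $\mathbb{Z}_p$ with $\{0,\dots,p-1\}$. The overflow indicator is $(x,y)_p=1$ if $x+y\ge p$ as integers and $0$ otherwise. $Q_{a,b}(\mathbb{Z}_p)$ is $\mathbb{Z}_p^3$ with multiplication $(x_1,x_2,x_3)(y_1,y_2,y_3)=(x_1+y_1+(x_2+y_2)x_3y_3+a(x_2,y_2)_p+b(x_3,y_3)_p,\ x_2+y_2,\ x_3+y_3)$. *)

From HB Require Import structures.
From mathcomp Require Import all_boot all_order all_algebra.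
Set Implicit Arguments. Unset Strict Implicit. Unset Printing Implicit Defensive.
Import GRing.Theory.
Local Open Scope ring_scope.

(* Z_p is identified with {0,...,p-1} via 'Z_p (p >= 2 assumed in uses). *)

(* overflow indicator (x,y)_p : 1 if x + y >= p as integers, else 0 *)
Definition ovf (p : nat) (x y : 'Z_p) : nat := ((p <= val x + val y)%N : nat).

Definition Qcar (p : nat) := ('Z_p * 'Z_p * 'Z_p)%type.

Definition Qmul (p : nat) (a b : 'Z_p) (x y : Qcar p) : Qcar p :=
  let: (x1, x2, x3) := x in
  let: (y1, y2, y3) := y in
  (x1 + y1 + (x2 + y2) * x3 * y3 + a *+ ovf x2 y2 + b *+ ovf x3 y3,
   x2 + y2, x3 + y3).

Definition Q_isomorphic (p : nat) (a1 b1 a2 b2 : 'Z_p) : Prop :=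
  exists f : Qcar p -> Qcar p,
    bijective f /\ forall x y, f (Qmul a1 b1 x y) = Qmul a2 b2 (f x) (f y).

(* a is a quadratic residue mod p (a square in Z_p; used for a <> 0) *)
Definition qres (p : nat) (a : 'Z_p) : bool := [exists x : 'Z_p, x ^+ 2 == a].

From HB Require Import structures.
From mathcomp Require Import all_boot all_order all_algebra ring.
Set Implicit Arguments. Unset Strict Implicit. Unset Printing Implicit Defensive.
Import GRing.Theory.
Local Open Scope ring_scope.

(* If a2 = a1 * mu^2 with mu a unit, then (x1, x2, x3) |-> (mu^2 x1, x2, mu x3)
   is an isomorphism Q_{a1,0}(Z_p) -> Q_{a2,0}(Z_p): the coordinate x2, which
   carries the overflow term, is untouched, and rescaling x1 by mu^2 and x3 by
   mu turns the cross term (x2 + y2) x3 y3 and the overflow term a1 (x2,y2)_p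
   into the corresponding terms for a2.  So it suffices that two nonzero
   elements of the same quadratic class differ by a square unit factor.  For non-squares we count, in any finite
   commutative ring whose nonzero elements are units and where 2 != 0: the
   squaring map is at most two-to-one on nonzero elements (x^2 = y^2 forces
   y = +-x), so there are at least half as many nonzero squares as nonzero
   elements; for a non-square a the sets S and a*S of nonzero squares and
   their a-multiples are disjoint and of equal size, hence cover all nonzero
   elements, and every non-square lies in a*S. *)

Section SquareClasses.
Variable R : finComUnitRingType.
Hypothesis unit_nz : forall x : R, x != 0 -> x \is a GRing.unit.
Hypothesis two_nz : 2 != 0 :> R.

Definition is_square (a : R) : bool := [exists x : R, x ^+ 2 == a].
Definition nonzero : {set R} := [set x | x != 0].
Definition nonzero_squares : {set R} := [set x ^+ 2 | x in nonzero].

Lemma mul_eq0_field (x y : R) : x * y = 0 -> x = 0 \/ y = 0.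
Proof.
have [-> | x_nz xy0] := eqVneq x 0; first by left.
by right; apply: (mulrI (unit_nz x_nz)); rewrite xy0 mulr0.
Qed.

Lemma nonzero_mul (x y : R) : x != 0 -> y != 0 -> x * y != 0.
Proof. by move=> x_nz y_nz; apply/eqP => /mul_eq0_field [] /eqP; apply/negP. Qed.

Lemma sqr_eq_sqr (x y : R) : x ^+ 2 = y ^+ 2 -> x = y \/ x = - y.
Proof.
move/eqP; rewrite -subr_eq0 subr_sqr => /eqP /mul_eq0_field [] /eqP.
  by rewrite subr_eq0 => /eqP; left.
by rewrite addr_eq0 => /eqP; right.
Qed.

Lemma neq_opp (x : R) : x != 0 -> x != - x.
Proof.
move=> x_nz; apply: contra two_nz => /eqP x_eq.
have : x * 2 = 0 by rewrite mulr_natr mulr2n {1}x_eq addNr.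
by case/mul_eq0_field => [x0 | ->]; first by rewrite x0 eqxx in x_nz.
Qed.

(* Squaring is at most two-to-one on nonzero elements: x |-> (x^2, b x), where
   the bit b x tells which of x, -x comes first in the enumeration of R, is
   injective there, with values in (nonzero squares) x bool. *)
Lemma nonzero_le_twice_squares : (#|nonzero| <= 2 * #|nonzero_squares|)%N.
Proof.
pose g (x : R) := (x ^+ 2, (enum_rank x < enum_rank (- x))%N).
have g_inj : {in nonzero &, injective g}.
  move=> x y; rewrite !inE => x_nz _ [sq_xy bit_xy].
  have [//|x_eq] := sqr_eq_sqr sq_xy.
  move: bit_xy; rewrite x_eq opprK => bit_xy.
  have ne : enum_rank y != enum_rank (- y).
    by rewrite (inj_eq enum_rank_inj); apply: neq_opp; rewrite -oppr_eq0 -x_eq.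
  by move: bit_xy ne; case: ltngtP => // /val_inj ->; rewrite eqxx.
rewrite -(card_in_imset g_inj) -card_bool mulnC -cardsT -cardsX.
apply: subset_leq_card; apply/subsetP => _ /imsetP[x x_nz ->].
by rewrite !inE /= andbT; apply/imsetP; exists x.
Qed.

(* For a nonzero non-square a, the nonzero squares S and the coset a*S are
   disjoint, of the same size, and together fill the nonzero elements. *)
Lemma nonsquare_coset_cover (a : R) : a != 0 -> ~~ is_square a ->
  nonzero = nonzero_squares :|: [set a * s | s in nonzero_squares].
Proof.
move=> a_nz a_nsq; set Sq := nonzero_squares; set A := [set a * s | s in Sq].
have Sq_nz : Sq \subset nonzero.
  by apply/subsetP => y /imsetP[x]; rewrite !inE => x_nz ->; rewrite expr2 nonzero_mul.
have A_nz : A \subset nonzero.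
  apply/subsetP => y /imsetP[s s_Sq ->]; rewrite inE nonzero_mul //.
  by move/subsetP/(_ s s_Sq): Sq_nz; rewrite inE.
have card_A : #|A| = #|Sq| by rewrite card_imset //; apply/mulrI/unit_nz.
have disj : [disjoint Sq & A].
  rewrite -setI_eq0; apply/eqP/setP => z; rewrite !inE.
  apply/negP => /andP[/imsetP[y _ ->] /imsetP[s /imsetP[x x_nz ->] y_eq]].
  rewrite inE in x_nz; apply: (negP a_nsq); apply/existsP; exists (y / x).
  by rewrite expr_div_n y_eq mulrK // unitrX // unit_nz.
apply/eqP; rewrite eq_sym eqEcard subUset Sq_nz A_nz /=.
move: (leq_card_setU Sq A).2; rewrite disj => /eqP ->.
by rewrite card_A addnn -mul2n nonzero_le_twice_squares.
Qed.

Lemma nonsquare_ratio (a b : R) : a != 0 -> b != 0 -> ~~ is_square a -> ~~ is_square b ->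
  exists2 x : R, x != 0 & b = a * x ^+ 2.
Proof.
move=> a_nz b_nz a_nsq b_nsq.
have : b \in nonzero by rewrite inE.
rewrite (nonsquare_coset_cover a_nz a_nsq) inE => /orP[/imsetP[x _ b_eq] |].
  by case/negP: b_nsq; apply/existsP; exists x; rewrite b_eq.
by case/imsetP => s /imsetP[x x_nz ->] ->; exists x; rewrite inE in x_nz.
Qed.

Lemma square_class_ratio (a1 a2 : R) : a1 != 0 -> a2 != 0 ->
  is_square a1 = is_square a2 -> exists2 mu : R, mu \is a GRing.unit & a2 = a1 * mu ^+ 2.
Proof.
move=> a1_nz a2_nz; have [a1_sq | a1_nsq] := boolP (is_square a1) => sq_eq.
  have root_unit a (x : R) : a != 0 -> x ^+ 2 = a -> x \is a GRing.unit.
    by move=> a_nz x_eq; apply: unit_nz; apply: contra a_nz => /eqP x0; rewrite -x_eq x0 expr0n.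
  have /existsP[s /eqP s_eq] := a1_sq.
  have /existsP[t /eqP t_eq] : is_square a2 by rewrite -sq_eq.
  have s_unit := root_unit _ _ a1_nz s_eq; have t_unit := root_unit _ _ a2_nz t_eq.
  exists (t / s); first by rewrite unitrMl ?unitrV.
  by rewrite -s_eq -t_eq expr_div_n mulrC mulrVK // unitrX.
have [x x_nz ->] := nonsquare_ratio a1_nz a2_nz a1_nsq (negbT (esym sq_eq)).
by exists x; first exact: unit_nz.
Qed.

End SquareClasses.

Definition Qscale (p : nat) (mu : 'Z_p) (x : Qcar p) : Qcar p :=
  let: (x1, x2, x3) := x in (mu ^+ 2 * x1, x2, mu * x3).

Lemma Qscale_inv (p : nat) (mu : 'Z_p) : mu \is a GRing.unit ->
  cancel (Qscale mu) (Qscale mu^-1).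
Proof. by move=> mu_unit [[x1 x2] x3] /=; rewrite exprVn !mulKr ?unitrX. Qed.

Lemma Qscale_morph (p : nat) (a mu : 'Z_p) (x y : Qcar p) :
  Qscale mu (Qmul a 0 x y) = Qmul (a * mu ^+ 2) 0 (Qscale mu x) (Qscale mu y).
Proof.
case: x y => [[x1 x2] x3] [[y1 y2] y3] /=.
by rewrite !mul0rn !addr0; congr (_, _, _); ring.
Qed.

Lemma Q_isomorphic_scale (p : nat) (a mu : 'Z_p) : mu \is a GRing.unit ->
  Q_isomorphic a 0 (a * mu ^+ 2) 0.
Proof.
move=> mu_unit; exists (Qscale mu); split; last exact: Qscale_morph.
exists (Qscale mu^-1); first exact: Qscale_inv.
by have := Qscale_inv (mu := mu^-1); rewrite invrK unitrV; apply.
Qed.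

Lemma Zp_unit_nz (p : nat) : prime p -> forall x : 'Z_p, x != 0 -> x \is a GRing.unit.
Proof.
move=> p_prime x x_nz; have p_gt1 := prime_gt1 p_prime.
rewrite -(natr_Zp x) unitZpE // prime_coprime // gtnNdvd //.
  by rewrite lt0n; apply: contra x_nz => /eqP x0; apply/eqP/val_inj.
by rewrite -[p in (_ < p)%N](Zp_cast p_gt1) ltn_ord.
Qed.

Lemma Zp_two_nz (p : nat) : prime p -> odd p -> 2 != 0 :> 'Z_p.
Proof.
move=> p_prime p_odd; have : (2 : 'Z_p) \is a GRing.unit.
  by rewrite unitZpE ?prime_gt1 // coprimen2.
by apply: contraTneq => ->; rewrite unitr0.
Qed.

Theorem lemma5p7 (p : nat) (a1 a2 : 'Z_p) :
  prime p -> odd p -> a1 != 0 -> a2 != 0 ->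
  qres a1 = qres a2 ->
  Q_isomorphic a1 0 a2 0.
Proof.
move=> p_prime p_odd a1_nz a2_nz same_class.
have [mu mu_unit ->] := square_class_ratio (Zp_unit_nz p_prime)
  (Zp_two_nz p_prime p_odd) a1_nz a2_nz same_class.
exact: Q_isomorphic_scale.
Qed.
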